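(* Let a rectangular subdivision be given by its tree structure, where each node stores the rectangle it represents and (for interior nodes) its splitting segment. Then a minimum-size segment-cover of the cells of the subdivision can be computed in time linear in the size of the tree.
   Context: A rectangular subdivision (as in a KD-tree) is obtained from an axis-aligned rectangle by recursively splitting a rectangle into two rectangles by a horizontal or vertical segment spanning it. The tree structure is a binary tree: the root stores the initial rectangle; each interior node stores its rectangle and a horizontal or vertical splitting segment dividing it into the two rectangles stored at its two children; leaves store the cells of the subdivision. The segments are the four edges of the bounding rectangle and the splitting segments. A segment covers a bounded cell if it is part of that cell's boundary, where a segment that has only an endpoint on the boundary of a cell is not considered part of that cell's boundary. The outer (unbounded) face is covered if and only if at least one of the edges of the bounding rectangle is in the cover. A segment-cover is a set of segments covering every cell (including the outer face). *)

From Stdlib Require Import Reals List ZArith.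
Import ListNotations.
Open Scope R_scope.

Definition point := (R * R)%type.
(* a segment is given by its two endpoints (lower/left endpoint first) *)
Definition seg := (point * point)%type.

Record rect := mkRect { rxl : R; rxh : R; ryl : R; ryh : R }.

Definition on_seg (s : seg) (z : point) : Prop :=
  exists t, 0 <= t <= 1 /\
    fst z = fst (fst s) + t * (fst (snd s) - fst (fst s)) /\
    snd z = snd (fst s) + t * (snd (snd s) - snd (fst s)).

Definition in_closed (r : rect) (z : point) : Prop :=
  rxl r <= fst z <= rxh r /\ ryl r <= snd z <= ryh r.
Definition in_open (r : rect) (z : point) : Prop :=
  rxl r < fst z < rxh r /\ ryl r < snd z < ryh r.
Definition on_boundary (r : rect) (z : point) : Prop :=
  in_closed r z /\ ~ in_open r z.

(* a segment covers a bounded cell iff a non-degenerate piece of it lies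
   on the cell's boundary (touching the boundary only in an endpoint,
   or in a single point, does not count) *)
Definition covers_cell (s : seg) (c : rect) : Prop :=
  exists p q : point, p <> q /\
    forall z, on_seg (p, q) z -> on_seg s z /\ on_boundary c z.

Inductive split := VSplit (a : R) | HSplit (b : R).

Inductive kdtree :=
| Leaf (r : rect)
| Node (r : rect) (sp : split) (l rt : kdtree).

Definition root_rect (t : kdtree) : rect :=
  match t with Leaf r => r | Node r _ _ _ => r end.

Definition split_seg (r : rect) (sp : split) : seg :=
  match sp with
  | VSplit a => ((a, ryl r), (a, ryh r))
  | HSplit b => ((rxl r, b), (rxh r, b))
  end.

(* well-formed subdivision tree: nondegenerate rectangles, splits strictly
   inside, children are exactly the two halves (left/bottom child first) *)
Fixpoint valid_tree (t : kdtree) : Prop :=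
  match t with
  | Leaf r => rxl r < rxh r /\ ryl r < ryh r
  | Node r sp l rt =>
      rxl r < rxh r /\ ryl r < ryh r /\
      match sp with
      | VSplit a => rxl r < a < rxh r /\
          root_rect l = mkRect (rxl r) a (ryl r) (ryh r) /\
          root_rect rt = mkRect a (rxh r) (ryl r) (ryh r)
      | HSplit b => ryl r < b < ryh r /\
          root_rect l = mkRect (rxl r) (rxh r) (ryl r) b /\
          root_rect rt = mkRect (rxl r) (rxh r) b (ryh r)
      end /\ valid_tree l /\ valid_tree rt
  end.

Definition boundary_edges (r : rect) : list seg :=
  [ ((rxl r, ryl r), (rxh r, ryl r));
    ((rxl r, ryh r), (rxh r, ryh r));
    ((rxl r, ryl r), (rxl r, ryh r));
    ((rxh r, ryl r), (rxh r, ryh r)) ].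

Fixpoint split_segs (t : kdtree) : list seg :=
  match t with
  | Leaf _ => []
  | Node r sp l rt => split_seg r sp :: split_segs l ++ split_segs rt
  end.

Definition segments (t : kdtree) : list seg :=
  boundary_edges (root_rect t) ++ split_segs t.

Fixpoint cells (t : kdtree) : list rect :=
  match t with
  | Leaf r => [r]
  | Node _ _ l rt => cells l ++ cells rt
  end.

Fixpoint tree_size (t : kdtree) : nat :=
  match t with
  | Leaf _ => 1
  | Node _ _ l rt => S (tree_size l + tree_size rt)
  end.

(* a segment-cover: a set of segments of the subdivision covering every
   bounded cell, and the outer face (= containing a bounding edge) *)
Definition is_segment_cover (t : kdtree) (C : list seg) : Prop :=
  (forall s, In s C -> In s (segments t)) /\
  (forall c, In c (cells t) -> exists s, In s C /\ covers_cell s c) /\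
  (exists s, In s C /\ In s (boundary_edges (root_rect t))).

(* minimum-size segment cover (sets represented by duplicate-free lists) *)
Definition is_min_segment_cover (t : kdtree) (C : list seg) : Prop :=
  NoDup C /\ is_segment_cover t C /\
  forall C', NoDup C' -> is_segment_cover t C' -> (length C <= length C')%nat.

(* 2. Machine model: a real-RAM with unit-cost operations              *)
(*    - real numbers with +, -, *, <, = (no floor), integer constants   *)

Inductive val :=
| VUnit
| VBool (b : bool)
| VReal (r : R)
| VNat (n : nat)
| VPair (v w : val).

Inductive rop := RAdd | RSub | RMul.
Inductive cmp := CLt | CEq.

Inductive exp :=
| EVar (i : nat)                  (* de Bruijn variable *)
| EUnit
| EBool (b : bool)
| EConstR (z : Z)
| EConstN (n : nat)
| EPair (e1 e2 : exp)
| EFst (e : exp)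
| ESnd (e : exp)
| EIsPair (e : exp)
| EIf (c e1 e2 : exp)
| ELet (e1 e2 : exp)              (* e2 sees the value of e1 as EVar 0 *)
| ECall (f : nat) (e : exp)
| EROp (o : rop) (e1 e2 : exp)
| ERCmp (c : cmp) (e1 e2 : exp)
| ENAdd (e1 e2 : exp)
| ENSub (e1 e2 : exp)             (* truncated subtraction *)
| ENCmp (c : cmp) (e1 e2 : exp)
| ERead (a : exp)
| EWrite (a e : exp).

(* a program: list of function bodies; function 0 is the entry point *)
Definition program := list exp.
Definition memory := nat -> val.

Definition rop_sem (o : rop) (x y : R) : R :=
  match o with RAdd => x + y | RSub => x - y | RMul => x * y end.
Definition rcmp_sem (c : cmp) (x y : R) : bool :=
  match c with
  | CLt => if Rlt_dec x y then true else false
  | CEq => if Req_dec_T x y then true else false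
  end.
Definition ncmp_sem (c : cmp) (x y : nat) : bool :=
  match c with CLt => Nat.ltb x y | CEq => Nat.eqb x y end.

Definition upd (m : memory) (a : nat) (v : val) : memory :=
  fun b => if Nat.eqb a b then v else m b.

Inductive eval (P : program) : list val -> memory -> exp -> val -> memory -> nat -> Prop :=
| ev_var env m i v : nth_error env i = Some v -> eval P env m (EVar i) v m 1
| ev_unit env m : eval P env m EUnit VUnit m 1
| ev_bool env m b : eval P env m (EBool b) (VBool b) m 1
| ev_constR env m z : eval P env m (EConstR z) (VReal (IZR z)) m 1
| ev_constN env m n : eval P env m (EConstN n) (VNat n) m 1
| ev_pair env m m1 m2 e1 e2 v1 v2 k1 k2 :
    eval P env m e1 v1 m1 k1 -> eval P env m1 e2 v2 m2 k2 ->
    eval P env m (EPair e1 e2) (VPair v1 v2) m2 (S (k1 + k2))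
| ev_fst env m m1 e v w k :
    eval P env m e (VPair v w) m1 k -> eval P env m (EFst e) v m1 (S k)
| ev_snd env m m1 e v w k :
    eval P env m e (VPair v w) m1 k -> eval P env m (ESnd e) w m1 (S k)
| ev_ispair env m m1 e v k :
    eval P env m e v m1 k ->
    eval P env m (EIsPair e) (VBool (match v with VPair _ _ => true | _ => false end)) m1 (S k)
| ev_if_true env m m1 m2 c e1 e2 v k1 k2 :
    eval P env m c (VBool true) m1 k1 -> eval P env m1 e1 v m2 k2 ->
    eval P env m (EIf c e1 e2) v m2 (S (k1 + k2))
| ev_if_false env m m1 m2 c e1 e2 v k1 k2 :
    eval P env m c (VBool false) m1 k1 -> eval P env m1 e2 v m2 k2 ->
    eval P env m (EIf c e1 e2) v m2 (S (k1 + k2))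
| ev_let env m m1 m2 e1 e2 v1 v k1 k2 :
    eval P env m e1 v1 m1 k1 -> eval P (v1 :: env) m1 e2 v m2 k2 ->
    eval P env m (ELet e1 e2) v m2 (S (k1 + k2))
| ev_call env m m1 m2 f e body a v k1 k2 :
    nth_error P f = Some body ->
    eval P env m e a m1 k1 -> eval P [a] m1 body v m2 k2 ->
    eval P env m (ECall f e) v m2 (S (k1 + k2))
| ev_rop env m m1 m2 o e1 e2 x y k1 k2 :
    eval P env m e1 (VReal x) m1 k1 -> eval P env m1 e2 (VReal y) m2 k2 ->
    eval P env m (EROp o e1 e2) (VReal (rop_sem o x y)) m2 (S (k1 + k2))
| ev_rcmp env m m1 m2 c e1 e2 x y k1 k2 :
    eval P env m e1 (VReal x) m1 k1 -> eval P env m1 e2 (VReal y) m2 k2 ->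
    eval P env m (ERCmp c e1 e2) (VBool (rcmp_sem c x y)) m2 (S (k1 + k2))
| ev_nadd env m m1 m2 e1 e2 x y k1 k2 :
    eval P env m e1 (VNat x) m1 k1 -> eval P env m1 e2 (VNat y) m2 k2 ->
    eval P env m (ENAdd e1 e2) (VNat (x + y)) m2 (S (k1 + k2))
| ev_nsub env m m1 m2 e1 e2 x y k1 k2 :
    eval P env m e1 (VNat x) m1 k1 -> eval P env m1 e2 (VNat y) m2 k2 ->
    eval P env m (ENSub e1 e2) (VNat (x - y)) m2 (S (k1 + k2))
| ev_ncmp env m m1 m2 c e1 e2 x y k1 k2 :
    eval P env m e1 (VNat x) m1 k1 -> eval P env m1 e2 (VNat y) m2 k2 ->
    eval P env m (ENCmp c e1 e2) (VBool (ncmp_sem c x y)) m2 (S (k1 + k2))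
| ev_read env m m1 a x k :
    eval P env m a (VNat x) m1 k -> eval P env m (ERead a) (m1 x) m1 (S k)
| ev_write env m m1 m2 a e x v k1 k2 :
    eval P env m a (VNat x) m1 k1 -> eval P env m1 e v m2 k2 ->
    eval P env m (EWrite a e) VUnit (upd m2 x v) (S (k1 + k2)).

Definition empty_memory : memory := fun _ => VUnit.

Definition runs (P : program) (v w : val) (k : nat) : Prop :=
  exists body m', nth_error P 0 = Some body /\ eval P [v] empty_memory body w m' k.

Definition enc_point (p : point) : val := VPair (VReal (fst p)) (VReal (snd p)).
Definition enc_seg (s : seg) : val := VPair (enc_point (fst s)) (enc_point (snd s)).
Definition enc_rect (r : rect) : val :=
  VPair (VPair (VReal (rxl r)) (VReal (rxh r))) (VPair (VReal (ryl r)) (VReal (ryh r))).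

Fixpoint enc_tree (t : kdtree) : val :=
  match t with
  | Leaf r => VPair (VBool false) (enc_rect r)
  | Node r sp l rt =>
      VPair (VBool true)
        (VPair (enc_rect r) (VPair (enc_seg (split_seg r sp)) (VPair (enc_tree l) (enc_tree rt))))
  end.

Fixpoint enc_segs (l : list seg) : val :=
  match l with
  | [] => VUnit
  | s :: l' => VPair (enc_seg s) (enc_segs l')
  end.

(* Segments of the subdivision never overlap, so a segment covers a cell exactly
   when it is one of the four maximal segments containing the sides of the
   cell, its frame.  Frames are inherited down the tree: a split replaces one
   side of each child's frame by the splitting segment.  A minimum cover is
   therefore found by a dynamic program on the tree whose state at a node is the
   set of sides of its frame already chosen; at the root one tries the 15
   nonempty choices of bounding edges.  Every node does constant work, both when
   the tables are computed bottom-up and when the chosen segments are collected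
   top-down.  The programs are verified by symbolic evaluation, where a recursive
   call is answered by the (unique) result of the callee. *)

From Pilot Require Import Defs.
From Stdlib Require Import Reals List.
From Stdlib Require Import Lia Lra ZArith Permutation ClassicalEpsilon.
Import ListNotations.
Open Scope nat_scope.

(** * Symbolic evaluation *)

Lemma eval_deterministic P env m e v m' k :
  eval P env m e v m' k ->
  forall v2 m2 k2, eval P env m e v2 m2 k2 -> v = v2 /\ m' = m2 /\ k = k2.
Proof.
  induction 1; intros v2' m2' k2' H'; inversion H'; subst;
  repeat match goal with
         | H1 : ?x = Some _, H2 : ?x = Some _ |- _ => rewrite H1 in H2; injection H2 as <-
         | IH : forall v m k, eval _ _ ?m0 ?e v m k -> _, H : eval _ _ ?m0 ?e _ _ _ |- _ =>
             destruct (IH _ _ _ H) as [? [? ?]]; clear H IH; subst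
         | H : VPair _ _ = VPair _ _ |- _ => injection H as <- <-
         | H : VReal _ = VReal _ |- _ => injection H as <-
         | H : VNat _ = VNat _ |- _ => injection H as <-
         | H : VBool _ = VBool _ |- _ => discriminate H
         end; auto.
Qed.

Definition call_result (P : program) (m : memory) (f : nat) (a : val) (r : val * nat) : Prop :=
  exists body, nth_error P f = Some body /\ eval P [a] m body (fst r) m (snd r).

(* Answers a call with a result of the callee, chosen classically; by
   [eval_deterministic] it is the result. *)
Definition oracle (P : program) (m : memory) (f : nat) (a : val) : option (val * nat) :=
  match excluded_middle_informative (exists r, call_result P m f a r) with
  | left H => Some (proj1_sig (constructive_indefinite_description _ H))
  | right _ => None
  end.
Arguments oracle : simpl never.

Lemma oracle_sound P m f a r : oracle P m f a = Some r -> call_result P m f a r.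
Proof.
  unfold oracle. destruct excluded_middle_informative as [H|H]; [|discriminate].
  intros [= <-]. exact (proj2_sig (constructive_indefinite_description _ H)).
Qed.

Lemma oracle_call P m f body a v k :
  nth_error P f = Some body -> eval P [a] m body v m k -> oracle P m f a = Some (v, k).
Proof.
  intros Hf Hev. unfold oracle.
  destruct excluded_middle_informative as [H|H]; [|exfalso; apply H; now exists (v, k), body].
  destruct (constructive_indefinite_description _ H) as [[v' k'] [body' [Hf' Hev']]]; simpl in *.
  rewrite Hf in Hf'. injection Hf' as <-.
  now destruct (eval_deterministic _ _ _ _ _ _ _ Hev _ _ _ Hev') as [-> [_ ->]].
Qed.

(* Merge of two values under a possibly symbolic condition, pushed through
   the constructors they share. *)
Fixpoint vif (b : bool) (v w : val) : val :=
  match v, w with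
  | VNat x, VNat y => VNat (if b then x else y)
  | VBool x, VBool y => VBool (if b then x else y)
  | VReal x, VReal y => VReal (if b then x else y)
  | VUnit, VUnit => VUnit
  | VPair v1 v2, VPair w1 w2 => VPair (vif b v1 w1) (vif b v2 w2)
  | _, _ => if b then v else w
  end.
(* Unfolded only on two constructors, so that merges with unknown values stay folded. *)
Arguments vif b !v !w.

Lemma vif_if b v w : vif b v w = if b then v else w.
Proof.
  revert w; induction v; intros []; destruct b; simpl; auto; now rewrite IHv1, IHv2.
Qed.

(* A cost bound is a pair: the steps taken locally, and the total cost of calls. *)
Definition cost := (nat * nat)%type.
Definition cstep (a : cost) : cost := (S (fst a), snd a).
Definition cseq (a b : cost) : cost := (S (fst a + fst b), snd a + snd b).
Definition cbranch (a b : cost) : cost := (Nat.max (fst a) (fst b), snd a + snd b).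

Definition lift2 (f : val -> val -> option val) (o1 o2 : option (val * cost)) :
    option (val * cost) :=
  match o1, o2 with
  | Some (v1, c1), Some (v2, c2) =>
      match f v1 v2 with Some v => Some (v, cseq c1 c2) | None => None end
  | _, _ => None
  end.

Definition real_op (o : rop) (v w : val) : option val :=
  match v, w with VReal x, VReal y => Some (VReal (rop_sem o x y)) | _, _ => None end.
Definition real_cmp (c : cmp) (v w : val) : option val :=
  match v, w with VReal x, VReal y => Some (VBool (rcmp_sem c x y)) | _, _ => None end.
Definition nat_op (g : nat -> nat -> nat) (v w : val) : option val :=
  match v, w with VNat x, VNat y => Some (VNat (g x y)) | _, _ => None end.
Definition nat_cmp (c : cmp) (v w : val) : option val :=
  match v, w with VNat x, VNat y => Some (VBool (ncmp_sem c x y)) | _, _ => None end.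

Section SymbolicRun.
Variables (P : program) (m : memory).

(* Both branches of a conditional are run and merged with [vif], so that
   conditions on symbolic data still evaluate; on concrete data the branch
   that is not taken must either fail or be discarded by [vif_if]. *)
Fixpoint run (env : list val) (e : Defs.exp) : option (val * cost) :=
  match e with
  | EVar i => option_map (fun v => (v, (1, 0))) (nth_error env i)
  | EUnit => Some (VUnit, (1, 0))
  | EBool b => Some (VBool b, (1, 0))
  | EConstR z => Some (VReal (IZR z), (1, 0))
  | EConstN n => Some (VNat n, (1, 0))
  | EPair e1 e2 => lift2 (fun v w => Some (VPair v w)) (run env e1) (run env e2)
  | EFst e => match run env e with Some (VPair v _, c) => Some (v, cstep c) | _ => None end
  | ESnd e => match run env e with Some (VPair _ w, c) => Some (w, cstep c) | _ => None end
  | EIsPair e =>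
      match run env e with
      | Some (v, c) => Some (VBool (match v with VPair _ _ => true | _ => false end), cstep c)
      | None => None
      end
  | EIf e0 e1 e2 =>
      match run env e0 with
      | Some (VBool b, c0) =>
          match run env e1, run env e2 with
          | Some (v1, c1), Some (v2, c2) => Some (vif b v1 v2, cseq c0 (cbranch c1 c2))
          | Some (v1, c1), None => if b then Some (v1, cseq c0 c1) else None
          | None, Some (v2, c2) => if b then None else Some (v2, cseq c0 c2)
          | None, None => None
          end
      | _ => None
      end
  | ELet e1 e2 =>
      match run env e1 with
      | Some (v1, c1) =>
          match run (v1 :: env) e2 with Some (v, c2) => Some (v, cseq c1 c2) | None => None end
      | None => None
      end
  | ECall f e =>
      match run env e with
      | Some (a, c) =>
          match oracle P m f a with
          | Some (v, k) => Some (v, (S (fst c), snd c + k))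
          | None => None
          end
      | None => None
      end
  | EROp o e1 e2 => lift2 (real_op o) (run env e1) (run env e2)
  | ERCmp o e1 e2 => lift2 (real_cmp o) (run env e1) (run env e2)
  | ENAdd e1 e2 => lift2 (nat_op Nat.add) (run env e1) (run env e2)
  | ENSub e1 e2 => lift2 (nat_op Nat.sub) (run env e1) (run env e2)
  | ENCmp o e1 e2 => lift2 (nat_cmp o) (run env e1) (run env e2)
  | ERead _ | EWrite _ _ => None
  end.

Lemma lift2_inv f o1 o2 v c : lift2 f o1 o2 = Some (v, c) ->
  exists v1 c1 v2 c2,
    o1 = Some (v1, c1) /\ o2 = Some (v2, c2) /\ f v1 v2 = Some v /\ c = cseq c1 c2.
Proof.
  unfold lift2. destruct o1 as [[v1 c1]|], o2 as [[v2 c2]|]; try discriminate.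
  destruct (f v1 v2) eqn:E; [|discriminate]. intros [= <- <-]. eauto 8.
Qed.

Ltac split_run H :=
  repeat match type of H with
  | lift2 _ _ _ = Some _ =>
      let Ef := fresh "Ef" in
      apply lift2_inv in H as (? & ? & ? & ? & ? & ? & Ef & ->); split_run Ef
  | Some _ = Some _ => injection H; clear H; intros; subst
  | None = Some _ => discriminate H
  | context [match ?x with _ => _ end] =>
      let E := fresh "E" in destruct x eqn:E; try discriminate H
  end.

Lemma run_sound e : forall env v c,
  run env e = Some (v, c) -> exists k, eval P env m e v m k /\ k <= fst c + snd c.
Proof.
  induction e; intros env v cst H; simpl in H;
    unfold option_map, real_op, real_cmp, nat_op, nat_cmp in H; split_run H;
    repeat match goal with
    | IH : forall env v c, run env ?e = Some (v, c) -> _, E : run ?env ?e = Some (_, _) |- _ =>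
        destruct (IH _ _ _ E) as (? & ? & ?); clear E
    | E : oracle _ _ _ _ = Some _ |- _ => apply oracle_sound in E as (? & ? & ?)
    | b : bool |- context [vif ?b _ _] => rewrite vif_if; destruct b
    end.
  all: try (eexists; split; [econstructor; eauto | simpl in *; lia]).
Qed.

End SymbolicRun.

Lemma run_correct P m env e v v' c K :
  run P m env e = Some (v', c) -> v' = v -> fst c + snd c <= K ->
  exists k, eval P env m e v m k /\ k <= K.
Proof.
  intros Hrun -> HK. destruct (run_sound P m e env v c Hrun) as (k & Hev & Hk).
  exists k; split; [exact Hev | lia].
Qed.

(** * Frames and the dynamic program *)

(* Quadruples are indexed by the sides of a rectangle: left, right, bottom, top. *)
Definition quad (A : Type) : Type := (A * A * A * A)%type.

Definition quad_list {A} (q : quad A) : list A := let '(a, b, c, d) := q in [a; b; c; d].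
Definition quad_map {A B} (f : A -> B) (q : quad A) : quad B :=
  let '(a, b, c, d) := q in (f a, f b, f c, f d).
Definition quad_any (m : quad bool) : bool := let '(a, b, c, d) := m in a || b || c || d.
Definition quad_count (m : quad bool) : nat :=
  let '(a, b, c, d) := m in Nat.b2n a + Nat.b2n b + Nat.b2n c + Nat.b2n d.

Definition marked {A} (F : quad A) (m : quad bool) : list A :=
  let '(l, r, b, t) := F in
  let '(ml, mr, mb, mt) := m in
  (if ml then [l] else []) ++ (if mr then [r] else []) ++
  (if mb then [b] else []) ++ (if mt then [t] else []).

(* A vertical split becomes the right side of the left child and the left side
   of the right child, a horizontal one the top of the lower child and the
   bottom of the upper one. *)
Definition split_quad {A} (vertical : bool) (x : A) (q : quad A) : quad A * quad A :=
  let '(l, r, b, t) := q in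
  if vertical then ((l, x, b, t), (x, r, b, t)) else ((l, r, b, x), (l, r, x, t)).

Definition is_vertical (sp : Defs.split) : bool :=
  match sp with VSplit _ => true | HSplit _ => false end.

Lemma split_quad_map {A B} (f : A -> B) v x q :
  split_quad v (f x) (quad_map f q) =
  (quad_map f (fst (split_quad v x q)), quad_map f (snd (split_quad v x q))).
Proof. destruct q as [[[? ?] ?] ?], v; reflexivity. Qed.

Lemma quad_any_map {A} (f : A -> bool) q x :
  In x (quad_list q) -> f x = true -> quad_any (quad_map f q) = true.
Proof.
  destruct q as [[[? ?] ?] ?]. intros [<-|[<-|[<-|[<-|[]]]]] Hx; simpl;
  rewrite Hx, ?Bool.orb_true_r; reflexivity.
Qed.

Lemma marked_split {A} v (x : A) F c m :
  incl (marked (fst (split_quad v x F)) (fst (split_quad v c m)))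
       (marked F m ++ (if c then [x] else [])) /\
  incl (marked (snd (split_quad v x F)) (snd (split_quad v c m)))
       (marked F m ++ (if c then [x] else [])).
Proof.
  destruct F as [[[L R] B] T], m as [[[ml mr] mb] mt].
  destruct v, c, ml, mr, mb, mt; split; intros y; simpl; tauto.
Qed.

Lemma marked_any {A} (F : quad A) m :
  quad_any m = true -> exists s, In s (quad_list F) /\ In s (marked F m).
Proof.
  destruct F as [[[L R] B] T], m as [[[[] []] []] []]; try discriminate; intros _;
  (eexists; split; [|simpl; eauto]; simpl; tauto).
Qed.

Lemma marked_length {A} (F : quad A) m : length (marked F m) = quad_count m.
Proof. destruct F as [[[? ?] ?] ?], m as [[[[] []] []] []]; reflexivity. Qed.

Lemma marked_incl {A} (F : quad A) m : incl (marked F m) (quad_list F).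
Proof. destruct F as [[[? ?] ?] ?], m as [[[[] []] []] []]; intros y; simpl; tauto. Qed.

Lemma marked_nodup {A} (F : quad A) m : NoDup (quad_list F) -> NoDup (marked F m).
Proof.
  destruct F as [[[a b] c] d]. simpl. intros Hnd.
  apply NoDup_cons_iff in Hnd as [Ha Hnd]; apply NoDup_cons_iff in Hnd as [Hb Hnd];
  apply NoDup_cons_iff in Hnd as [Hc _]. simpl in *.
  destruct m as [[[[] []] []] []]; simpl; repeat constructor; simpl; tauto.
Qed.

Definition seg_eq_dec (s u : seg) : {s = u} + {s <> u}.
Proof. repeat decide equality; apply Req_dec_T. Defined.

Definition memb (C : list seg) (s : seg) : bool := if in_dec seg_eq_dec s C then true else false.

Lemma memb_In C s : memb C s = true <-> In s C.
Proof. unfold memb; destruct in_dec; split; congruence || tauto. Qed.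

Definition count_in (C l : list seg) : nat := length (filter (memb C) l).

Lemma count_in_cons C s l : count_in C (s :: l) = Nat.b2n (memb C s) + count_in C l.
Proof. unfold count_in; simpl; now destruct (memb C s). Qed.

Lemma count_in_app C l1 l2 : count_in C (l1 ++ l2) = count_in C l1 + count_in C l2.
Proof. unfold count_in. now rewrite filter_app, length_app. Qed.

Lemma count_in_quad C q : count_in C (quad_list q) = quad_count (quad_map (memb C) q).
Proof.
  destruct q as [[[a b] c] d]. unfold count_in; simpl.
  now destruct (memb C a), (memb C b), (memb C c), (memb C d).
Qed.

Lemma NoDup_app_incl {A} (l1 l2 s1 s2 : list A) :
  NoDup l1 -> NoDup l2 -> incl l1 s1 -> incl l2 s2 -> NoDup (s1 ++ s2) -> NoDup (l1 ++ l2).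
Proof.
  intros N1 N2 I1 I2 N. apply NoDup_app; auto. intros a H1 H2.
  apply I1, in_split in H1 as (x & y & ->). apply I2 in H2.
  rewrite <- app_assoc in N. apply NoDup_remove_2 in N. apply N, in_app_iff; right.
  apply in_app_iff; auto.
Qed.

Fixpoint cell_frames (t : kdtree) (F : quad seg) : list (rect * quad seg) :=
  match t with
  | Leaf c => [(c, F)]
  | Node r sp l rt =>
      let (Fl, Fr) := split_quad (is_vertical sp) (split_seg r sp) F in
      cell_frames l Fl ++ cell_frames rt Fr
  end.

Lemma cell_frames_cells t : forall F, map fst (cell_frames t F) = cells t.
Proof.
  induction t as [r|r sp l IHl rt IHr]; intros F; [reflexivity|].
  simpl. destruct split_quad. now rewrite map_app, IHl, IHr.
Qed.

Lemma cell_frames_sides t : forall F c Fc u, In (c, Fc) (cell_frames t F) ->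
  In u (quad_list Fc) -> In u (quad_list F) \/ In u (split_segs t).
Proof.
  induction t as [r|r sp l IHl rt IHr]; intros F c Fc u H Hu.
  - destruct H as [[= <- <-]|[]]. auto.
  - simpl in H |- *. destruct (split_quad (is_vertical sp) (split_seg r sp) F) as [Fl Fr] eqn:EF.
    assert (Hsp : forall u, In u (quad_list Fl) \/ In u (quad_list Fr) ->
                            In u (quad_list F) \/ u = split_seg r sp).
    { destruct F as [[[? ?] ?] ?], (is_vertical sp); injection EF as <- <-; simpl; intuition. }
    rewrite in_app_iff. apply in_app_or in H as [H|H];
    [destruct (IHl _ _ _ _ H Hu) as [H'|H'] | destruct (IHr _ _ _ _ H Hu) as [H'|H']];
    try destruct (Hsp u (or_introl H')); try destruct (Hsp u (or_intror H')); intuition.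
Qed.

Definition hits (fr : list (rect * quad seg)) (C : list seg) : Prop :=
  forall c F, In (c, F) fr -> exists s, In s (quad_list F) /\ In s C.

Lemma hits_app fr1 fr2 C : hits (fr1 ++ fr2) C <-> hits fr1 C /\ hits fr2 C.
Proof.
  unfold hits; split.
  - intros H; split; intros c F HF; apply (H c F), in_or_app; auto.
  - intros [H1 H2] c F [HF|HF]%in_app_or; [apply (H1 c F) | apply (H2 c F)]; exact HF.
Qed.

Lemma hits_incl fr C C' : hits fr C -> incl C C' -> hits fr C'.
Proof. intros H Hinc c F HF. destruct (H c F HF) as (s & Hs & HC). eauto. Qed.

(* [min_cover N t m] is the least number of splitting segments of [t] that,
   together with the sides of its frame marked by [m], hit the frame of every
   cell; [N] stands for infinity. *)
Fixpoint min_cover (N : nat) (t : kdtree) (m : quad bool) : nat :=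
  match t with
  | Leaf _ => if quad_any m then 0 else N
  | Node _ sp l rt =>
      let cost (c : bool) :=
        let (ml, mr) := split_quad (is_vertical sp) c m in
        Nat.b2n c + min_cover N l ml + min_cover N rt mr in
      Nat.min (cost false) (cost true)
  end.

Definition split_cost (N : nat) (sp : Defs.split) (l rt : kdtree) (m : quad bool) (c : bool) :
    nat :=
  let (ml, mr) := split_quad (is_vertical sp) c m in
  Nat.b2n c + min_cover N l ml + min_cover N rt mr.

Definition takes_split (N : nat) (sp : Defs.split) (l rt : kdtree) (m : quad bool) : bool :=
  split_cost N sp l rt m true <? split_cost N sp l rt m false.

Fixpoint opt_cover (N : nat) (t : kdtree) (m : quad bool) : list seg :=
  match t with
  | Leaf _ => []
  | Node r sp l rt =>
      let c := takes_split N sp l rt m in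
      let (ml, mr) := split_quad (is_vertical sp) c m in
      opt_cover N rt mr ++ opt_cover N l ml ++ (if c then [split_seg r sp] else [])
  end.

Lemma min_cover_node_le N r sp l rt m c :
  min_cover N (Node r sp l rt) m <= split_cost N sp l rt m c.
Proof.
  change (Nat.min (split_cost N sp l rt m false) (split_cost N sp l rt m true)
          <= split_cost N sp l rt m c).
  destruct c; lia.
Qed.

Lemma min_cover_node N r sp l rt m :
  min_cover N (Node r sp l rt) m = split_cost N sp l rt m (takes_split N sp l rt m).
Proof.
  change (Nat.min (split_cost N sp l rt m false) (split_cost N sp l rt m true) =
          split_cost N sp l rt m (takes_split N sp l rt m)).
  unfold takes_split.
  destruct (Nat.ltb_spec (split_cost N sp l rt m true) (split_cost N sp l rt m false)); lia.
Qed.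

Lemma min_cover_le_count N C t : forall F,
  hits (cell_frames t F) C -> min_cover N t (quad_map (memb C) F) <= count_in C (split_segs t).
Proof.
  induction t as [r|r sp l IHl rt IHr]; intros F H.
  - destruct (H r F (or_introl eq_refl)) as (s & Hs & HC%memb_In).
    destruct F as [[[L R] B] T]; simpl in Hs |- *.
    destruct Hs as [<-|[<-|[<-|[<-|[]]]]]; rewrite HC, ?Bool.orb_true_r; simpl; lia.
  - simpl cell_frames in H. set (s := split_seg r sp) in *.
    destruct (split_quad (is_vertical sp) s F) as [Fl Fr] eqn:EF.
    apply hits_app in H as [Hl Hr].
    eapply Nat.le_trans; [apply (min_cover_node_le _ _ _ _ _ _ (memb C s))|].
    unfold split_cost. rewrite split_quad_map, EF. simpl split_segs.
    rewrite count_in_cons, count_in_app. fold s.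
    specialize (IHl _ Hl). specialize (IHr _ Hr). simpl. lia.
Qed.

Lemma opt_cover_spec N t : forall F m, min_cover N t m < N ->
  length (opt_cover N t m) = min_cover N t m /\
  hits (cell_frames t F) (opt_cover N t m ++ marked F m).
Proof.
  induction t as [r|r sp l IHl rt IHr]; intros F m Hlt.
  - simpl in Hlt |- *. destruct (quad_any m) eqn:Hm; [|lia]. split; [reflexivity|].
    intros c Fc [[= <- <-]|[]]. exact (marked_any F m Hm).
  - rewrite min_cover_node in Hlt |- *. simpl opt_cover; simpl cell_frames.
    set (c := takes_split N sp l rt m) in *. set (s := split_seg r sp).
    destruct (marked_split (is_vertical sp) s F c m) as [Hml Hmr].
    unfold split_cost in Hlt |- *.
    destruct (split_quad (is_vertical sp) c m) as [ml mr] eqn:Em.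
    destruct (split_quad (is_vertical sp) s F) as [Fl Fr] eqn:EF. simpl in Hml, Hmr.
    destruct (IHl Fl ml) as [Ll Hl]; [lia|]. destruct (IHr Fr mr) as [Lr Hr]; [lia|].
    split.
    + rewrite !length_app, Ll, Lr. destruct c; simpl; lia.
    + apply hits_app; split; [eapply hits_incl; [exact Hl|] | eapply hits_incl; [exact Hr|]];
      intros y; specialize (Hml y); specialize (Hmr y); rewrite !in_app_iff in *; tauto.
Qed.

Lemma opt_cover_incl N t : forall m, incl (opt_cover N t m) (split_segs t).
Proof.
  induction t as [r|r sp l IHl rt IHr]; intros m; [intros ? []|].
  simpl. destruct split_quad as [ml mr]. intros y.
  specialize (IHl ml y). specialize (IHr mr y).
  destruct takes_split; simpl; rewrite !in_app_iff; simpl; tauto.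
Qed.

Lemma opt_cover_nodup N t : forall m, NoDup (split_segs t) -> NoDup (opt_cover N t m).
Proof.
  induction t as [r|r sp l IHl rt IHr]; intros m Hnd; [constructor|].
  simpl in Hnd |- *. set (s := split_seg r sp) in *.
  apply (Permutation_NoDup (Permutation_app_comm (s :: split_segs l) _)) in Hnd.
  pose proof (NoDup_app_remove_l _ _ Hnd) as Hl.
  destruct split_quad as [ml mr]. set (top := if takes_split N sp l rt m then [s] else []).
  assert (Nl : NoDup (opt_cover N l ml ++ top)).
  { apply NoDup_cons_iff in Hl as [Hs Hl]. unfold top.
    destruct takes_split; [|rewrite app_nil_r; auto].
    apply (NoDup_app_incl _ _ (split_segs l) [s]);
      auto using NoDup_cons, NoDup_nil, incl_refl, opt_cover_incl.
    now apply (Permutation_NoDup (Permutation_app_comm [s] _)), NoDup_cons. }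
  assert (Il : incl (opt_cover N l ml ++ top) (s :: split_segs l)).
  { intros y. specialize (opt_cover_incl N l ml y). unfold top.
    destruct takes_split; simpl; rewrite in_app_iff; simpl; tauto. }
  exact (NoDup_app_incl _ _ _ _ (IHr mr (NoDup_app_remove_r _ _ Hnd)) Nl
           (opt_cover_incl N rt mr) Il Hnd).
Qed.

(** * Geometry of the subdivision *)

Open Scope R_scope.

Definition hseg (y x1 x2 : R) : seg := ((x1, y), (x2, y)).
Definition vseg (x y1 y2 : R) : seg := ((x, y1), (x, y2)).

Definition axis_seg (s : seg) : Prop :=
  (exists y x1 x2, s = hseg y x1 x2 /\ x1 < x2) \/ (exists x y1 y2, s = vseg x y1 y2 /\ y1 < y2).

Definition overlap (s u : seg) : Prop :=
  (exists y a1 a2 b1 b2 p q, s = hseg y a1 a2 /\ u = hseg y b1 b2 /\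
     p < q /\ a1 <= p /\ q <= a2 /\ b1 <= p /\ q <= b2) \/
  (exists x a1 a2 b1 b2 p q, s = vseg x a1 a2 /\ u = vseg x b1 b2 /\
     p < q /\ a1 <= p /\ q <= a2 /\ b1 <= p /\ q <= b2).

Definition inner_seg (r : rect) (s : seg) : Prop :=
  (exists x y1 y2, s = vseg x y1 y2 /\ rxl r < x < rxh r /\ ryl r <= y1 /\ y1 < y2 /\ y2 <= ryh r) \/
  (exists y x1 x2, s = hseg y x1 x2 /\ ryl r < y < ryh r /\ rxl r <= x1 /\ x1 < x2 /\ x2 <= rxh r).

Definition non_overlapping (l : list seg) : Prop := ForallOrdPairs (fun s u => ~ overlap s u) l.

Ltac destruct_all := repeat match goal with
  | H : _ /\ _ |- _ => destruct H
  | H : exists _, _ |- _ => destruct H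
  | H : _ \/ _ |- _ => destruct H
  | H : (_, _) = (_, _) |- _ => injection H; clear H; intros
  end.
Ltac geometry :=
  unfold overlap, inner_seg, axis_seg, hseg, vseg in *; destruct_all; subst; destruct_all; subst;
  destruct_all; subst; simpl in *; try lra.

Lemma overlap_sym s u : overlap s u -> overlap u s.
Proof. intros [H|H]; destruct_all; [left|right]; do 7 eexists; repeat split; eauto. Qed.

Lemma overlap_refl s : axis_seg s -> overlap s s.
Proof.
  intros [H|H]; destruct_all; [left|right]; do 7 eexists; repeat split; eauto; lra.
Qed.

Lemma non_overlapping_app l1 l2 : non_overlapping l1 -> non_overlapping l2 ->
  (forall s u, In s l1 -> In u l2 -> ~ overlap s u) -> non_overlapping (l1 ++ l2).
Proof.
  induction 1 as [|s l1 Hs Hl1 IH]; intros H2 D; simpl; auto.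
  constructor.
  - apply Forall_app; split; [exact Hs|]. apply Forall_forall; intros u Hu. apply D; simpl; auto.
  - apply IH; auto. intros a b Ha Hb. apply D; simpl; auto.
Qed.

Lemma non_overlapping_nodup l : (forall s, In s l -> axis_seg s) -> non_overlapping l -> NoDup l.
Proof.
  intros Ax H; induction H as [|s l Hs Hl IH]; constructor.
  - intros Hin. eapply (proj1 (Forall_forall _ _) Hs); [exact Hin|]. apply overlap_refl, Ax; simpl; auto.
  - apply IH; intros; apply Ax; simpl; auto.
Qed.

Lemma non_overlapping_eq l s u : non_overlapping l -> In s l -> In u l -> overlap s u -> s = u.
Proof.
  intros H Hs Hu O. destruct (ForallOrdPairs_In H s u Hs Hu) as [E|[N|N]]; auto;
  exfalso; apply N; auto using overlap_sym.
Qed.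

Definition sub_rect (r' r : rect) : Prop :=
  rxl r <= rxl r' /\ rxh r' <= rxh r /\ ryl r <= ryl r' /\ ryh r' <= ryh r.

Lemma inner_seg_sub r' r s : sub_rect r' r -> inner_seg r' s -> inner_seg r s.
Proof.
  unfold sub_rect, inner_seg; intros Hs [H|H]; destruct_all; [left|right];
  do 3 eexists; repeat split; eauto; lra.
Qed.

Lemma valid_root t :
  valid_tree t -> rxl (root_rect t) < rxh (root_rect t) /\ ryl (root_rect t) < ryh (root_rect t).
Proof. destruct t; simpl; tauto. Qed.

Lemma split_segs_inner t :
  valid_tree t -> forall s, In s (split_segs t) -> inner_seg (root_rect t) s.
Proof.
  induction t as [r|r sp l IHl rt IHr]; intros V s Hs; simpl in Hs; [contradiction|].
  simpl in V. destruct V as (Vx & Vy & Vs & Vl & Vr). simpl.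
  destruct Hs as [<-|[Hs|Hs]%in_app_or].
  - destruct sp as [a|b]; simpl in Vs; [left|right]; do 3 eexists; repeat split; eauto; lra.
  - apply (inner_seg_sub (root_rect l)); [|apply IHl; auto].
    destruct sp; destruct Vs as (? & -> & _); unfold sub_rect; simpl; lra.
  - apply (inner_seg_sub (root_rect rt)); [|apply IHr; auto].
    destruct sp; destruct Vs as (? & _ & ->); unfold sub_rect; simpl; lra.
Qed.

(* Inner segments of the two halves of a split lie on either side of the split
   line, and the splitting segment spans it. *)
Lemma split_segs_non_overlapping t : valid_tree t -> non_overlapping (split_segs t).
Proof.
  induction t as [r|r sp l IHl rt IHr]; intros V; simpl; [constructor|].
  assert (V' := V). simpl in V'. destruct V' as (Vx & Vy & Vs & Vl & Vr).
  pose proof (split_segs_inner l Vl) as Il. pose proof (split_segs_inner rt Vr) as Ir.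
  constructor.
  - apply Forall_forall; intros u [Hu|Hu]%in_app_or;
    destruct sp as [a|b]; simpl in Vs; destruct Vs as (Va & El & Er);
    first [apply Il in Hu; rewrite El in Hu | apply Ir in Hu; rewrite Er in Hu];
    simpl in *; intro O; geometry.
  - apply non_overlapping_app; auto.
    intros u w Hu Hw. apply Il in Hu. apply Ir in Hw.
    destruct sp as [a|b]; simpl in Vs; destruct Vs as (Va & El & Er); rewrite El in Hu; rewrite Er in Hw;
    simpl in *; intro O; geometry.
Qed.

Lemma segments_axis t : valid_tree t -> forall s, In s (segments t) -> axis_seg s.
Proof.
  intros V s [Hs|Hs]%in_app_or; destruct (valid_root t V) as [Vx Vy].
  - simpl in Hs. unfold axis_seg, hseg, vseg.
    destruct Hs as [<-|[<-|[<-|[<-|[]]]]]; [left|left|right|right];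
      do 3 eexists; split; try reflexivity; lra.
  - destruct (split_segs_inner t V s Hs) as [H|H]; destruct_all; subst;
    [right|left]; do 3 eexists; split; eauto.
Qed.

Lemma segments_non_overlapping t : valid_tree t -> non_overlapping (segments t).
Proof.
  intros V. destruct (valid_root t V) as [Vx Vy]. pose proof (split_segs_inner t V) as I.
  apply non_overlapping_app; [| apply split_segs_non_overlapping; auto |].
  - repeat constructor; intro O; geometry.
  - intros a b Ha Hb. apply I in Hb. simpl in Ha. destruct_all; subst; intro O; geometry.
Qed.

Lemma segments_nodup t : valid_tree t -> NoDup (segments t).
Proof.
  intros V. apply non_overlapping_nodup; [apply segments_axis | apply segments_non_overlapping]; exact V.
Qed.

Definition framed (c : rect) (F : quad seg) : Prop :=
  let '(L, R, B, T) := F in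
  (exists y1 y2, L = vseg (rxl c) y1 y2 /\ y1 <= ryl c /\ ryh c <= y2) /\
  (exists y1 y2, R = vseg (rxh c) y1 y2 /\ y1 <= ryl c /\ ryh c <= y2) /\
  (exists x1 x2, B = hseg (ryl c) x1 x2 /\ x1 <= rxl c /\ rxh c <= x2) /\
  (exists x1 x2, T = hseg (ryh c) x1 x2 /\ x1 <= rxl c /\ rxh c <= x2).

Ltac solve_framed := repeat match goal with
  | |- _ /\ _ => split
  | |- exists _, _ => eexists
  end; try reflexivity; try eassumption; try lra.

Definition root_frame (r : rect) : quad seg :=
  (vseg (rxl r) (ryl r) (ryh r), vseg (rxh r) (ryl r) (ryh r),
   hseg (ryl r) (rxl r) (rxh r), hseg (ryh r) (rxl r) (rxh r)).

Lemma root_framed r : framed r (root_frame r).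
Proof. simpl; solve_framed. Qed.

Lemma cell_frames_framed t : valid_tree t -> forall F, framed (root_rect t) F ->
  forall c Fc, In (c, Fc) (cell_frames t F) -> framed c Fc /\ rxl c < rxh c /\ ryl c < ryh c.
Proof.
  induction t as [r|r sp l IHl rt IHr]; intros V [[[L R] B] T] HF c Fc H.
  - destruct H as [[= <- <-]|[]]. simpl in V. tauto.
  - simpl in V. destruct V as (Vx & Vy & Vs & Vl & Vr).
    simpl in HF. destruct HF as ((yl1 & yl2 & -> & ? & ?) & (yr1 & yr2 & -> & ? & ?) &
                                 (xb1 & xb2 & -> & ? & ?) & (xt1 & xt2 & -> & ? & ?)).
    destruct sp as [a|b]; destruct Vs as (Va & El & Er); simpl in H;
    apply in_app_or in H as [H|H];
    [eapply IHl; [exact Vl | | exact H]; rewrite El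
    |eapply IHr; [exact Vr | | exact H]; rewrite Er
    |eapply IHl; [exact Vl | | exact H]; rewrite El
    |eapply IHr; [exact Vr | | exact H]; rewrite Er]; simpl; unfold vseg, hseg; solve_framed.
Qed.

Lemma Rdiv_unit_interval a b : 0 < b -> 0 <= a <= b -> 0 <= a / b <= 1.
Proof.
  intros Hb Ha. assert (E : a = a / b * b) by (field; lra).
  set (t := a / b) in *. clearbody t. nra.
Qed.

Lemma on_vseg x y1 y2 z : y1 < y2 -> on_seg (vseg x y1 y2) z <-> fst z = x /\ y1 <= snd z <= y2.
Proof.
  unfold on_seg, vseg; simpl; intros Hy; split.
  - intros (t & Ht & E1 & E2). rewrite E2. split; [lra | nra].
  - intros [E Hz]. exists ((snd z - y1) / (y2 - y1)).
    split; [apply Rdiv_unit_interval; lra | split; [lra | field; lra]].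
Qed.

Lemma on_hseg y x1 x2 z : x1 < x2 -> on_seg (hseg y x1 x2) z <-> snd z = y /\ x1 <= fst z <= x2.
Proof.
  unfold on_seg, hseg; simpl; intros Hx; split.
  - intros (t & Ht & E1 & E2). rewrite E1. split; [lra | nra].
  - intros [E Hz]. exists ((fst z - x1) / (x2 - x1)).
    split; [apply Rdiv_unit_interval; lra | split; [field; lra | lra]].
Qed.

Lemma framed_side_covers c F s : rxl c < rxh c -> ryl c < ryh c -> framed c F ->
  In s (quad_list F) -> covers_cell s c.
Proof.
  destruct F as [[[L R] B] T]. intros Vx Vy HF Hs. simpl in HF.
  destruct HF as ((yl1 & yl2 & -> & ? & ?) & (yr1 & yr2 & -> & ? & ?) &
                  (xb1 & xb2 & -> & ? & ?) & (xt1 & xt2 & -> & ? & ?)).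
  unfold covers_cell, on_boundary, in_closed, in_open. simpl in Hs.
  destruct Hs as [<-|[<-|[<-|[<-|[]]]]];
    [exists (rxl c, ryl c), (rxl c, ryh c) | exists (rxh c, ryl c), (rxh c, ryh c)
    |exists (rxl c, ryl c), (rxh c, ryl c) | exists (rxl c, ryh c), (rxh c, ryh c)];
    (split; [intros [=]; lra|]; intros z Hz;
     first [apply (on_vseg _ _ _ z Vy) in Hz | apply (on_hseg _ _ _ z Vx) in Hz];
     destruct Hz as [Ez Hz];
     (split; [first [apply on_vseg | apply on_hseg]; lra | split; [lra | intros [[? ?] [? ?]]; lra]])).
Qed.

Lemma on_seg_points (p q : point) :
  on_seg (p, q) p /\ on_seg (p, q) q /\ on_seg (p, q) ((fst p + fst q) / 2, (snd p + snd q) / 2).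
Proof.
  split; [|split]; [exists 0 | exists 1 | exists (1/2)]; simpl; repeat split; lra.
Qed.

(* The covered piece [pq] has its midpoint on the boundary of [c]; since that
   midpoint lies strictly between two points of [c] on the line of [s], the
   line of [s] is a side line of [c]. *)
Lemma covers_hseg y x1 x2 c : x1 < x2 -> rxl c < rxh c -> covers_cell (hseg y x1 x2) c ->
  (y = ryl c \/ y = ryh c) /\ exists p q, p < q /\ x1 <= p /\ q <= x2 /\ rxl c <= p /\ q <= rxh c.
Proof.
  intros Hx Vx (p & q & Hpq & H).
  destruct (on_seg_points p q) as (Op & Oq & Om).
  destruct (H _ Op) as [Sp%on_hseg [Cp _]]; [|lra].
  destruct (H _ Oq) as [Sq%on_hseg [Cq _]]; [|lra].
  destruct (H _ Om) as [Sm%on_hseg [Cm Bm]]; [|lra].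
  unfold in_closed, in_open in *. destruct p as [px py], q as [qx qy]; simpl in *.
  assert (px <> qx) by (intro; apply Hpq; f_equal; lra).
  split.
  - destruct (Req_dec_T y (ryl c)); [auto|]. destruct (Req_dec_T y (ryh c)); [auto|].
    exfalso. apply Bm. destruct (Rlt_dec px qx); split; split; lra.
  - exists (Rmin px qx), (Rmax px qx). unfold Rmin, Rmax. destruct (Rle_dec px qx); repeat split; lra.
Qed.

Lemma covers_vseg x y1 y2 c : y1 < y2 -> ryl c < ryh c -> covers_cell (vseg x y1 y2) c ->
  (x = rxl c \/ x = rxh c) /\ exists p q, p < q /\ y1 <= p /\ q <= y2 /\ ryl c <= p /\ q <= ryh c.
Proof.
  intros Hy Vy (p & q & Hpq & H).
  destruct (on_seg_points p q) as (Op & Oq & Om).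
  destruct (H _ Op) as [Sp%on_vseg [Cp _]]; [|lra].
  destruct (H _ Oq) as [Sq%on_vseg [Cq _]]; [|lra].
  destruct (H _ Om) as [Sm%on_vseg [Cm Bm]]; [|lra].
  unfold in_closed, in_open in *. destruct p as [px py], q as [qx qy]; simpl in *.
  assert (py <> qy) by (intro; apply Hpq; f_equal; lra).
  split.
  - destruct (Req_dec_T x (rxl c)); [auto|]. destruct (Req_dec_T x (rxh c)); [auto|].
    exfalso. apply Bm. destruct (Rlt_dec py qy); split; split; lra.
  - exists (Rmin py qy), (Rmax py qy). unfold Rmin, Rmax. destruct (Rle_dec py qy); repeat split; lra.
Qed.

Lemma covers_overlaps_side c F s : rxl c < rxh c -> ryl c < ryh c -> framed c F -> axis_seg s ->
  covers_cell s c -> exists u, In u (quad_list F) /\ overlap s u.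
Proof.
  destruct F as [[[L R] B] T]. intros Vx Vy HF Hs Hcov. simpl in HF.
  destruct HF as ((yl1 & yl2 & -> & ? & ?) & (yr1 & yr2 & -> & ? & ?) &
                  (xb1 & xb2 & -> & ? & ?) & (xt1 & xt2 & -> & ? & ?)).
  destruct Hs as [(y & x1 & x2 & -> & Hx)|(x & y1 & y2 & -> & Hy)].
  - destruct (covers_hseg y x1 x2 c Hx Vx Hcov) as [[->| ->] (p & q & ? & ? & ? & ? & ?)];
    [exists (hseg (ryl c) xb1 xb2) | exists (hseg (ryh c) xt1 xt2)];
    (split; [simpl; tauto | left; do 5 eexists; exists p, q;
                            split; [reflexivity | split; [reflexivity | repeat split; lra]]]).
  - destruct (covers_vseg x y1 y2 c Hy Vy Hcov) as [[->| ->] (p & q & ? & ? & ? & ? & ?)];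
    [exists (vseg (rxl c) yl1 yl2) | exists (vseg (rxh c) yr1 yr2)];
    (split; [simpl; tauto | right; do 5 eexists; exists p, q;
                            split; [reflexivity | split; [reflexivity | repeat split; lra]]]).
Qed.

Open Scope nat_scope.

(** * Minimum covers *)

Lemma root_frame_boundary r : Permutation (quad_list (root_frame r)) (boundary_edges r).
Proof. exact (Permutation_app_comm [_; _] [_; _]). Qed.

Lemma cell_frame_sides_segments t c Fc u :
  In (c, Fc) (cell_frames t (root_frame (root_rect t))) -> In u (quad_list Fc) -> In u (segments t).
Proof.
  intros H Hu. apply in_or_app.
  destruct (cell_frames_sides t _ c Fc u H Hu) as [Hb|Hs]; [left | right; exact Hs].
  exact (Permutation_in _ (root_frame_boundary _) Hb).
Qed.

Lemma covers_cell_iff t c Fc s : valid_tree t ->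
  In (c, Fc) (cell_frames t (root_frame (root_rect t))) -> In s (segments t) ->
  covers_cell s c <-> In s (quad_list Fc).
Proof.
  intros V H Hs.
  destruct (cell_frames_framed t V _ (root_framed _) c Fc H) as (F & Vx & Vy).
  split; [|exact (framed_side_covers c Fc s Vx Vy F)].
  intros Hcov.
  destruct (covers_overlaps_side c Fc s Vx Vy F (segments_axis t V s Hs) Hcov) as (u & Hu & O).
  rewrite (non_overlapping_eq _ s u (segments_non_overlapping t V) Hs
             (cell_frame_sides_segments t c Fc u H Hu) O).
  exact Hu.
Qed.

Lemma cover_hits_frames t C : valid_tree t -> is_segment_cover t C ->
  hits (cell_frames t (root_frame (root_rect t))) C.
Proof.
  intros V (Hsub & Hcov & _) c Fc H.
  assert (Hc : In c (cells t)).
  { rewrite <- (cell_frames_cells t (root_frame (root_rect t))). now apply (in_map fst) in H. }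
  destruct (Hcov c Hc) as (s & HsC & Hsc). exists s. split; [|exact HsC].
  now apply (covers_cell_iff t c Fc s V H (Hsub s HsC)).
Qed.

Lemma count_in_root_frame C r :
  count_in C (quad_list (root_frame r)) = count_in C (boundary_edges r).
Proof.
  unfold count_in, root_frame, vseg, hseg; simpl.
  repeat match goal with |- context [memb C ?s] => destruct (memb C s) end; simpl; lia.
Qed.

(* The size of the cover made of the marked bounding edges and the best
   splitting segments; with no bounding edge the outer face is not covered. *)
Definition cover_size (N : nat) (t : kdtree) (m : quad bool) : nat :=
  if quad_any m then quad_count m + min_cover N t m else N.

Lemma cover_size_le_length N t C : valid_tree t -> NoDup C -> is_segment_cover t C ->
  cover_size N t (quad_map (memb C) (root_frame (root_rect t))) <= length C.
Proof.
  intros V Hnd HC. pose proof HC as (Hsub & _ & (e & HeC & He)).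
  set (F := root_frame (root_rect t)).
  assert (Hany : quad_any (quad_map (memb C) F) = true).
  { apply (quad_any_map _ _ e); [exact (Permutation_in _ (Permutation_sym (root_frame_boundary _)) He) |
                                 now apply memb_In]. }
  unfold cover_size. rewrite Hany, <- count_in_quad.
  pose proof (min_cover_le_count N C t F (cover_hits_frames t C V HC)) as Hmin.
  assert (Hall : count_in C (segments t) <= length C).
  { apply NoDup_incl_length; [apply NoDup_filter, segments_nodup, V|].
    intros s [_ Hs%memb_In]%filter_In. exact Hs. }
  unfold segments in Hall. rewrite count_in_app in Hall.
  unfold F in *; rewrite count_in_root_frame.
  exact (Nat.le_trans _ _ _ (proj1 (Nat.add_le_mono_l _ _ _) Hmin) Hall).
Qed.

Lemma cover_of_hits t C : valid_tree t -> incl C (segments t) ->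
  hits (cell_frames t (root_frame (root_rect t))) C ->
  (exists s, In s C /\ In s (boundary_edges (root_rect t))) -> is_segment_cover t C.
Proof.
  intros V Hsub Hhits Hout. split; [exact Hsub | split; [|exact Hout]].
  intros c Hc. rewrite <- (cell_frames_cells t (root_frame (root_rect t))) in Hc.
  apply in_map_iff in Hc as ([c' Fc] & <- & H).
  destruct (Hhits c' Fc H) as (s & Hs & HsC). exists s. split; [exact HsC|].
  now apply (covers_cell_iff t c' Fc s V H (Hsub s HsC)).
Qed.

Lemma segments_is_cover t : valid_tree t -> is_segment_cover t (segments t).
Proof.
  intros V. apply cover_of_hits; [exact V | apply incl_refl | |].
  - intros c Fc H. destruct Fc as [[[L R] B] T].
    exists L. split; [simpl; auto | apply (cell_frame_sides_segments t c _ L H); simpl; auto].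
  - set (r := root_rect t). exists ((rxl r, ryl r), (rxh r, ryl r)).
    split; [apply in_or_app|]; simpl; auto.
Qed.

Lemma opt_cover_is_cover N t m : valid_tree t -> cover_size N t m < N ->
  let C := opt_cover N t m ++ marked (root_frame (root_rect t)) m in
  NoDup C /\ is_segment_cover t C /\ length C = cover_size N t m.
Proof.
  intros V Hlt C. unfold cover_size in *.
  destruct (quad_any m) eqn:Hany; [|lia].
  set (F := root_frame (root_rect t)) in *.
  destruct (opt_cover_spec N t F m ltac:(lia)) as [Hlen Hhits].
  pose proof (segments_nodup t V) as Hnd. unfold segments in Hnd.
  assert (HF : incl (marked F m) (boundary_edges (root_rect t))).
  { intros s Hs. exact (Permutation_in _ (root_frame_boundary _) (marked_incl F m s Hs)). }
  split; [|split].
  - apply (NoDup_app_incl _ _ (split_segs t) (boundary_edges (root_rect t))).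
    + exact (opt_cover_nodup N t m (NoDup_app_remove_l _ _ Hnd)).
    + apply marked_nodup, (Permutation_NoDup (Permutation_sym (root_frame_boundary _))).
      exact (NoDup_app_remove_r _ _ Hnd).
    + apply opt_cover_incl.
    + exact HF.
    + exact (Permutation_NoDup (Permutation_app_comm _ _) Hnd).
  - apply cover_of_hits; [exact V | | exact Hhits |].
    + intros s [Hs|Hs]%in_app_or; apply in_or_app;
        [right; exact (opt_cover_incl N t m s Hs) | left; exact (HF s Hs)].
    + destruct (marked_any F m Hany) as (s & _ & Hs).
      exists s. split; [apply in_or_app; auto | exact (HF s Hs)].
  - unfold C. now rewrite length_app, Hlen, marked_length, Nat.add_comm.
Qed.

(** * The algorithm on the machine *)

Local Notation size_fn := 1 (only parsing).
Local Notation dp_fn := 2 (only parsing).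
Local Notation rec_fn := 3 (only parsing).
Local Notation finish_fn := 4 (only parsing).

(* A table indexed by the 16 mark quadruples, as a complete binary tree. *)
Definition table {A} (node : A -> A -> A) (g : quad bool -> A) : A :=
  let g4 b1 b2 b3 := node (g (b1, b2, b3, false)) (g (b1, b2, b3, true)) in
  let g3 b1 b2 := node (g4 b1 b2 false) (g4 b1 b2 true) in
  let g2 b1 := node (g3 b1 false) (g3 b1 true) in
  node (g2 false) (g2 true).

Definition enc_table (f : quad bool -> nat) : val := table VPair (fun m => VNat (f m)).

Definition enc_marks (m : quad bool) : val :=
  let '(a, b, c, d) := m in VPair (VBool a) (VPair (VBool b) (VPair (VBool c) (VBool d))).

Definition select_e (b : bool) (e : Defs.exp) : Defs.exp := if b then ESnd e else EFst e.

Definition lookup_e (T : Defs.exp) (m : quad bool) : Defs.exp :=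
  let '(b1, b2, b3, b4) := m in select_e b4 (select_e b3 (select_e b2 (select_e b1 T))).

Definition lookup_dyn_e (T : Defs.exp) (m : quad Defs.exp) : Defs.exp :=
  let '(b1, b2, b3, b4) := m in
  let r1 T := EIf b4 (ESnd T) (EFst T) in
  let r2 T := EIf b3 (r1 (ESnd T)) (r1 (EFst T)) in
  let r3 T := EIf b2 (r2 (ESnd T)) (r2 (EFst T)) in
  EIf b1 (r3 (ESnd T)) (r3 (EFst T)).

Definition quad_e (q : quad Defs.exp) : Defs.exp :=
  let '(a, b, c, d) := q in EPair a (EPair b (EPair c d)).

Definition marks_e (st : Defs.exp) : quad Defs.exp :=
  (EFst st, EFst (ESnd st), EFst (ESnd (ESnd st)), ESnd (ESnd (ESnd st))).

Definition tree_left_e (x : Defs.exp) : Defs.exp := EFst (ESnd (ESnd (ESnd x))).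
Definition tree_right_e (x : Defs.exp) : Defs.exp := ESnd (ESnd (ESnd (ESnd x))).

Definition size_body : Defs.exp :=
  EIf (EFst (EVar 0))
    (ENAdd (EConstN 1) (ENAdd (ECall size_fn (tree_left_e (EVar 0)))
                              (ECall size_fn (tree_right_e (EVar 0)))))
    (EConstN 1).

Definition ann_node (T : val) (r : rect) (kids : val) : val := VPair T (VPair (enc_rect r) kids).

Fixpoint ann_kids (N : nat) (t : kdtree) : val :=
  match t with
  | Leaf _ => VUnit
  | Node r sp l rt =>
      VPair (VBool (is_vertical sp)) (VPair (enc_seg (split_seg r sp))
        (VPair (ann_node (enc_table (min_cover N l)) (root_rect l) (ann_kids N l))
               (ann_node (enc_table (min_cover N rt)) (root_rect rt) (ann_kids N rt))))
  end.

(* The tree annotated with the tables of [min_cover].  Its root is a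
   constructor term, so projections out of [ann N t] compute for unknown [t]. *)
Definition ann (N : nat) (t : kdtree) : val :=
  ann_node (enc_table (min_cover N t)) (root_rect t) (ann_kids N t).

(* [Nat.min x y], computed as [x - (x - y)] with truncated subtraction. *)
Definition min_entry_e (vert : bool) (TL TR : Defs.exp) (m : quad bool) : Defs.exp :=
  let (l0, r0) := split_quad vert false m in
  let (l1, r1) := split_quad vert true m in
  let x := ENAdd (lookup_e TL l0) (lookup_e TR r0) in
  let y := ENAdd (ENAdd (EConstN 1) (lookup_e TL l1)) (lookup_e TR r1) in
  ENSub x (ENSub x y).

Definition dp_leaf : Defs.exp :=
  (* x :: (N, x) *)
  EPair (table EPair (fun m => if quad_any m then EConstN 0 else EFst (EVar 1)))
        (EPair (ESnd (EVar 0)) EUnit).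

Definition dp_node : Defs.exp :=
  (* x :: (N, x) *)
  ELet (ECall dp_fn (EPair (EFst (EVar 1)) (tree_left_e (EVar 0))))
  (* Al :: x :: _ *)
  (ELet (ECall dp_fn (EPair (EFst (EVar 2)) (tree_right_e (EVar 1))))
  (* Ar :: Al :: x :: _ *)
  (ELet (EFst (ESnd (ESnd (EVar 2))))
  (* s :: Ar :: Al :: x :: _ *)
  (ELet (ERCmp CEq (EFst (EFst (EVar 0))) (EFst (ESnd (EVar 0))))
  (* vertical :: s :: Ar :: Al :: x :: _ *)
  (EPair (table EPair (fun m => EIf (EVar 0) (min_entry_e true (EFst (EVar 3)) (EFst (EVar 2)) m)
                                             (min_entry_e false (EFst (EVar 3)) (EFst (EVar 2)) m)))
         (EPair (EFst (ESnd (EVar 4)))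
                (EPair (EVar 0) (EPair (EVar 1) (EPair (EVar 3) (EVar 2))))))))).

Definition dp_body : Defs.exp := ELet (ESnd (EVar 0)) (EIf (EFst (EVar 0)) dp_node dp_leaf).

Definition kid_vertical_e (K : Defs.exp) : Defs.exp := EFst K.
Definition kid_seg_e (K : Defs.exp) : Defs.exp := EFst (ESnd K).
Definition kid_left_e (K : Defs.exp) : Defs.exp := EFst (ESnd (ESnd K)).
Definition kid_right_e (K : Defs.exp) : Defs.exp := ESnd (ESnd (ESnd K)).
Definition arg_marks_e (arg : Defs.exp) : quad Defs.exp := marks_e (EFst (ESnd arg)).
Definition arg_acc_e (arg : Defs.exp) : Defs.exp := ESnd (ESnd arg).

Definition takes_split_e (vert : bool) (K : Defs.exp) (m : quad Defs.exp) : Defs.exp :=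
  let TL := EFst (kid_left_e K) in
  let TR := EFst (kid_right_e K) in
  let (l0, r0) := split_quad vert (EBool false) m in
  let (l1, r1) := split_quad vert (EBool true) m in
  ENCmp CLt (ENAdd (ENAdd (EConstN 1) (lookup_dyn_e TL l1)) (lookup_dyn_e TR r1))
            (ENAdd (lookup_dyn_e TL l0) (lookup_dyn_e TR r0)).

Definition child_marks_e (side : quad Defs.exp * quad Defs.exp -> quad Defs.exp)
    (K c : Defs.exp) (m : quad Defs.exp) : Defs.exp :=
  EIf (kid_vertical_e K) (quad_e (side (split_quad true c m))) (quad_e (side (split_quad false c m))).

Definition rec_node : Defs.exp :=
  (* K :: (A, (marks, acc)), where K holds the children of A *)
  ELet (EIf (kid_vertical_e (EVar 0)) (takes_split_e true (EVar 0) (arg_marks_e (EVar 1)))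
                                       (takes_split_e false (EVar 0) (arg_marks_e (EVar 1))))
  (* c :: K :: arg *)
  (ELet (EIf (EVar 0) (EPair (kid_seg_e (EVar 1)) (arg_acc_e (EVar 2))) (arg_acc_e (EVar 2)))
  (* acc :: c :: K :: arg *)
  (ELet (ECall rec_fn (EPair (kid_left_e (EVar 2))
                             (EPair (child_marks_e fst (EVar 2) (EVar 1) (arg_marks_e (EVar 3)))
                                    (EVar 0))))
  (* acc' :: acc :: c :: K :: arg *)
  (ECall rec_fn (EPair (kid_right_e (EVar 3))
                       (EPair (child_marks_e snd (EVar 3) (EVar 2) (arg_marks_e (EVar 4)))
                              (EVar 0)))))).

Definition rec_body : Defs.exp :=
  ELet (ESnd (ESnd (EFst (EVar 0)))) (EIf (EIsPair (EVar 0)) rec_node (arg_acc_e (EVar 1))).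

Definition frame_e (rect : Defs.exp) : quad Defs.exp :=
  let xl := EFst (EFst rect) in let xh := ESnd (EFst rect) in
  let yl := EFst (ESnd rect) in let yh := ESnd (ESnd rect) in
  (EPair (EPair xl yl) (EPair xl yh), EPair (EPair xh yl) (EPair xh yh),
   EPair (EPair xl yl) (EPair xh yl), EPair (EPair xl yh) (EPair xh yh)).

Definition marked_e (F m : quad Defs.exp) : Defs.exp :=
  let '(l, r, b, t) := F in
  let '(ml, mr, mb, mt) := m in
  let push c s acc := EIf c (EPair s acc) acc in
  push ml l (push mr r (push mb b (push mt t EUnit))).

Definition finish_body : Defs.exp :=
  (* (A, marks) *)
  ELet (EFst (ESnd (EFst (EVar 0))))
  (* rect :: (A, marks) *)
  (ECall rec_fn (EPair (EFst (EVar 1))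
                       (EPair (ESnd (EVar 1))
                              (marked_e (frame_e (EVar 0)) (marks_e (ESnd (EVar 1))))))).

Definition pick_e (e1 e2 : Defs.exp) : Defs.exp := EIf (ENCmp CLt (EFst e2) (EFst e1)) e2 e1.

Definition candidate_e (T N : Defs.exp) (m : quad bool) : Defs.exp :=
  EPair (if quad_any m then ENAdd (EConstN (quad_count m)) (lookup_e T m) else N)
        (quad_e (quad_map EBool m)).

Definition main_body : Defs.exp :=
  (* x *)
  ELet (ECall size_fn (EVar 0))
  (* n :: x *)
  (ELet (ENAdd (EVar 0) (EConstN 5))
  (* N :: n :: x *)
  (ELet (ECall dp_fn (EPair (EVar 0) (EVar 2)))
  (* A :: N :: n :: x *)
  (ECall finish_fn (EPair (EVar 0) (ESnd (table pick_e (candidate_e (EFst (EVar 0)) (EVar 1)))))))).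

Definition program_cover : program := [main_body; size_body; dp_body; rec_body; finish_body].

Definition fstn (v : val) : nat := match v with VPair (VNat n) _ => n | _ => 0 end.
Definition pick (v w : val) : val := vif (fstn w <? fstn v) w v.
Definition candidate (N : nat) (t : kdtree) (m : quad bool) : val :=
  VPair (VNat (cover_size N t m)) (enc_marks m).
Definition marks_of (v : val) : quad bool :=
  match v with
  | VPair _ (VPair (VBool a) (VPair (VBool b) (VPair (VBool c) (VBool d)))) => (a, b, c, d)
  | _ => (false, false, false, false)
  end.

(* Mirrors the tournament of [main_body], whose result is thus [best_marks]
   by computation. *)
Definition best_marks (N : nat) (t : kdtree) : quad bool := marks_of (table pick (candidate N t)).

(* Larger than any cover, which has at most [4 + tree_size t] segments. *)
Definition infinity (t : kdtree) : nat := tree_size t + 5.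

Definition best_cover (t : kdtree) : list seg :=
  let m := best_marks (infinity t) t in
  opt_cover (infinity t) t m ++ marked (root_frame (root_rect t)) m.

Definition cost_bound (C : nat) (t : kdtree) : nat := C * tree_size t.

Lemma cost_leaf C r c : fst c <= C -> snd c = 0 -> fst c + snd c <= cost_bound C (Leaf r).
Proof. unfold cost_bound; simpl; lia. Qed.

Lemma cost_node C r sp l rt c kl kr : fst c <= C -> snd c <= kl + kr ->
  kl <= cost_bound C l -> kr <= cost_bound C rt -> fst c + snd c <= cost_bound C (Node r sp l rt).
Proof. unfold cost_bound; simpl; lia. Qed.

Lemma cost_main c t ks kd kf : fst c <= 1500 -> snd c <= ks + kd + kf ->
  ks <= cost_bound 20 t -> kd <= cost_bound 800 t -> kf <= cost_bound 250 t + 100 ->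
  fst c + snd c <= cost_bound 2700 t.
Proof. unfold cost_bound. assert (1 <= tree_size t) by (destruct t; simpl; lia). lia. Qed.

Lemma sub_sub_min x y : x - (x - y) = Nat.min x y.
Proof. lia. Qed.

Lemma vif_acc c s L :
  vif c (VPair (enc_seg s) (enc_segs L)) (enc_segs L) = enc_segs ((if c then [s] else []) ++ L).
Proof. rewrite vif_if; now destruct c. Qed.

Ltac steps_le := apply Nat.leb_le; reflexivity.

Ltac fold_acc :=
  match goal with
  | |- context [vif ?c (VPair (enc_seg ?s) (enc_segs ?L)) (enc_segs ?L)] => rewrite (vif_acc c s L)
  end.

(* The cast matches the argument of the call up to conversion. *)
Ltac use_call HP E :=
  match goal with
  | |- context [oracle ?P ?m ?f ?arg] =>
      rewrite (oracle_call _ _ _ _ _ _ _ HP E : oracle P m f arg = _)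
  end.

(* Instantiates [IH] at the marks and accumulator of the call site where [E]
   is used. *)
Ltac open_call IH k E K :=
  let x1 := fresh "x" in let x2 := fresh "x" in let x3 := fresh "x" in let x4 := fresh "x" in
  let L := fresh "L" in
  evar (x1 : bool); evar (x2 : bool); evar (x3 : bool); evar (x4 : bool); evar (L : list seg);
  destruct (IH (x1, x2, x3, x4) L) as (k & E & K); subst x1 x2 x3 x4 L.

Section Correctness.
Variables (P : program) (mem : memory).
Hypothesis size_fn_body : nth_error P size_fn = Some size_body.
Hypothesis dp_fn_body : nth_error P dp_fn = Some dp_body.
Hypothesis rec_fn_body : nth_error P rec_fn = Some rec_body.
Hypothesis finish_fn_body : nth_error P finish_fn = Some finish_body.

Lemma size_correct t :
  exists k, eval P [enc_tree t] mem size_body (VNat (tree_size t)) mem k /\ k <= cost_bound 20 t.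
Proof.
  induction t as [r|r sp l [kl [El Kl]] rt [kr [Er Kr]]].
  - eapply run_correct; [simpl; reflexivity | reflexivity | apply cost_leaf; [steps_le | reflexivity]].
  - eapply run_correct.
    + simpl. use_call size_fn_body El. simpl. use_call size_fn_body Er. simpl. reflexivity.
    + reflexivity.
    + apply (cost_node _ _ _ _ _ _ kl kr); [steps_le | simpl; lia | exact Kl | exact Kr].
Qed.

(* The equality test of [dp_node] recognises vertical splits since the
   rectangles are not degenerate. *)
Lemma dp_correct N t : valid_tree t ->
  exists k, eval P [VPair (VNat N) (enc_tree t)] mem dp_body (ann N t) mem k /\
            k <= cost_bound 800 t.
Proof.
  induction t as [r|r sp l IHl rt IHr]; intros V.
  - eapply run_correct; [simpl; reflexivity | reflexivity | apply cost_leaf; [steps_le | reflexivity]].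
  - simpl in V. destruct V as (Vx & Vy & Vs & Vl & Vr).
    destruct (IHl Vl) as [kl [El Kl]], (IHr Vr) as [kr [Er Kr]].
    destruct sp as [a|b]; (eapply run_correct;
      [ simpl; use_call dp_fn_body El; simpl; use_call dp_fn_body Er; simpl;
        match goal with |- context [Req_dec_T ?x ?y] =>
          destruct (Req_dec_T x y) as [E|E]; [(exfalso; lra) || reflexivity | (now elim E) || reflexivity]
        end
      | rewrite ?vif_if, !sub_sub_min; reflexivity
      | apply (cost_node _ _ _ _ _ _ kl kr); [steps_le | simpl; lia | exact Kl | exact Kr]]).
Qed.

Lemma rec_correct N t : forall m L,
  exists k, eval P [VPair (ann N t) (VPair (enc_marks m) (enc_segs L))] mem rec_body
                 (enc_segs (opt_cover N t m ++ L)) mem k /\ k <= cost_bound 250 t.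
Proof.
  induction t as [r|r sp l IHl rt IHr]; intros [[[b1 b2] b3] b4] L.
  - eapply run_correct; [simpl; reflexivity | reflexivity | apply cost_leaf; [steps_le | reflexivity]].
  - destruct sp; open_call IHl kl El Kl; open_call IHr kr Er Kr; (eapply run_correct;
      [ simpl; fold_acc; use_call rec_fn_body El; simpl; use_call rec_fn_body Er; simpl; reflexivity
      | rewrite vif_if; f_equal; destruct b1, b2, b3, b4; simpl; rewrite <- !app_assoc; reflexivity
      | apply (cost_node _ _ _ _ _ _ kl kr); [steps_le | simpl; lia | exact Kl | exact Kr]]).
Qed.

Lemma finish_correct N t m :
  exists k, eval P [VPair (ann N t) (enc_marks m)] mem finish_body
                 (enc_segs (opt_cover N t m ++ marked (root_frame (root_rect t)) m)) mem k /\
            k <= cost_bound 250 t + 100.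
Proof.
  destruct (rec_correct N t m (marked (root_frame (root_rect t)) m)) as (k & E & K).
  destruct m as [[[[] []] []] []]; (eapply run_correct;
    [simpl; use_call rec_fn_body E; reflexivity | reflexivity | simpl; lia]).
Qed.

Lemma main_correct t : valid_tree t ->
  exists k, eval P [enc_tree t] mem main_body (enc_segs (best_cover t)) mem k /\
            k <= cost_bound 2700 t.
Proof.
  intros V.
  destruct (size_correct t) as (ks & Es & Ks).
  destruct (dp_correct (infinity t) t V) as (kd & Ed & Kd).
  evar (x1 : bool); evar (x2 : bool); evar (x3 : bool); evar (x4 : bool).
  destruct (finish_correct (infinity t) t (x1, x2, x3, x4)) as (kf & Ef & Kf); subst x1 x2 x3 x4.
  eapply run_correct.
  - simpl. use_call size_fn_body Es. simpl. use_call dp_fn_body Ed. simpl.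
    use_call finish_fn_body Ef. simpl. reflexivity.
  - reflexivity.
  - apply (cost_main _ _ ks kd kf); [steps_le | simpl; lia | exact Ks | exact Kd | exact Kf].
Qed.

End Correctness.

Lemma pick_in (Q : val -> Prop) v w : Q v -> Q w -> Q (pick v w).
Proof. unfold pick; rewrite vif_if; now destruct Nat.ltb. Qed.

Lemma pick_le_l v w : fstn (pick v w) <= fstn v.
Proof. unfold pick; rewrite vif_if. destruct (Nat.ltb_spec (fstn w) (fstn v)); lia. Qed.

Lemma pick_le_r v w : fstn (pick v w) <= fstn w.
Proof. unfold pick; rewrite vif_if. destruct (Nat.ltb_spec (fstn w) (fstn v)); lia. Qed.

Lemma table_pick_attained (g : quad bool -> val) : exists m, table pick g = g m.
Proof. unfold table; repeat apply (pick_in (fun v => exists m, v = g m)); eauto. Qed.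

Lemma table_pick_min (g : quad bool -> val) m : fstn (table pick g) <= fstn (g m).
Proof.
  assert (descend : forall v w u, fstn v <= u \/ fstn w <= u -> fstn (pick v w) <= u).
  { intros v w u [H|H]; [exact (Nat.le_trans _ _ _ (pick_le_l v w) H) |
                         exact (Nat.le_trans _ _ _ (pick_le_r v w) H)]. }
  destruct m as [[[[] []] []] []]; unfold table; auto 10.
Qed.

Lemma best_marks_min N t m : cover_size N t (best_marks N t) <= cover_size N t m.
Proof.
  destruct (table_pick_attained (candidate N t)) as (m0 & E).
  pose proof (table_pick_min (candidate N t) m) as H. unfold best_marks. rewrite E in H |- *.
  destruct m0 as [[[? ?] ?] ?]. exact H.
Qed.

Lemma split_segs_length t : length (split_segs t) <= tree_size t.
Proof. induction t; simpl; [lia|]. rewrite length_app. lia. Qed.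

Lemma best_cover_min t : valid_tree t -> is_min_segment_cover t (best_cover t).
Proof.
  intros V. unfold best_cover. set (N := infinity t). set (m := best_marks N t).
  assert (Hfeas : cover_size N t m < N).
  { set (all := quad_map (memb (segments t)) (root_frame (root_rect t))).
    apply (Nat.le_lt_trans _ (cover_size N t all)); [apply best_marks_min|].
    eapply Nat.le_lt_trans;
      [apply cover_size_le_length; auto using segments_nodup, segments_is_cover|].
    unfold segments. rewrite length_app. pose proof (split_segs_length t).
    simpl. unfold N, infinity. lia. }
  destruct (opt_cover_is_cover N t m V Hfeas) as (Hnd & Hcov & Hlen).
  split; [exact Hnd | split; [exact Hcov |]].
  intros C' Hnd' Hcov'. rewrite Hlen.
  eapply Nat.le_trans; [apply best_marks_min | exact (cover_size_le_length N t C' V Hnd' Hcov')].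
Qed.

Open Scope R_scope.

Theorem theorem4 :
  exists (P : program) (c : nat),
    forall t : kdtree, valid_tree t ->
      exists (C : list seg) (k : nat),
        runs P (enc_tree t) (enc_segs C) k /\
        (k <= c * tree_size t)%nat /\
        is_min_segment_cover t C.
Proof.
  exists program_cover, 2700%nat. intros t V.
  destruct (main_correct program_cover empty_memory eq_refl eq_refl eq_refl eq_refl t V)
    as (k & E & K).
  exists (best_cover t), k. split; [|split].
  - exists main_body, empty_memory. split; [reflexivity | exact E].
  - exact K.
  - exact (best_cover_min t V).
Qed.
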